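(* Let $\Gamma$ be a tetravalent graph whose full automorphism group $\mathrm{Aut}(\Gamma)$ acts regularly on the arcs of $\Gamma$. Then $\Gamma$ is the underlying graph of a map of class $2_{\{0,1\}}$ if and only if the vertex stabilizers in $\mathrm{Aut}(\Gamma)$ are isomorphic to the Klein $4$-group. Moreover, in this case there are exactly three pairwise nonisomorphic such maps.
   Context: A map is a $2$-cell embedding of a connected simple graph (its underlying graph) in a closed surface; the components of the complement are the faces. All maps considered are polytopal: flags correspond bijectively to incident triples (vertex, edge, face). For a flag $\Phi$ and $i\in\{0,1,2\}$, $\Phi^i$ is the unique flag differing from $\Phi$ exactly in its vertex ($i=0$), edge ($i=1$) or face ($i=2$). $\mathrm{Aut}(\mathcal M)$ is the group of automorphisms of the underlying graph preserving the set of faces, acting on flags. A map is in class $2_{\{0,1\}}$ if $\mathrm{Aut}(\mathcal M)$ has exactly two orbits on flags and for every flag $\Phi$, the flags $\Phi^0,\Phi^1$ lie in the orbit of $\Phi$ while $\Phi^2$ does not. *)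

From mathcomp Require Import all_boot all_fingroup zmodp.
Set Implicit Arguments. Unset Strict Implicit. Unset Printing Implicit Defensive.

(* Edges are the 2-element vertex sets [set x; y] with e x y; a face is
   represented by its set of edges (a set of sets of vertices); a map is
   represented by its set of faces F. *)

Section MapDefs.
Variable V : finType.
Variable e : rel V.

Definition simple_graph : Prop := symmetric e /\ irreflexive e.
Definition connected_graph : Prop := forall x y : V, connect e x y.
Definition tetravalent : Prop := forall v : V, #|[set w | e v w]| = 4.

Definition graph_aut_set : {set {perm V}} :=
  [set g : {perm V} | [forall x, forall y, e (g x) (g y) == e x y]].

Lemma graph_aut_group_set : group_set graph_aut_set.
Proof.
apply/group_setP; split.
  by rewrite inE; apply/forallP => x; apply/forallP => y; rewrite !perm1.
move=> g h; rewrite !inE => /forallP Hg /forallP Hh.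
apply/forallP => x; apply/forallP => y; rewrite !permM.
by rewrite (eqP (forallP (Hh (g x)) (g y))) (eqP (forallP (Hg x) y)).
Qed.

Canonical graph_aut := Group graph_aut_group_set.

Definition arc_regular : Prop :=
  forall x y x' y' : V, e x y -> e x' y' ->
    #|[set g in graph_aut | (g x == x') && (g y == y')]| = 1.

Definition klein_stabilizers : Prop :=
  forall v : V, 'C_(graph_aut)[v | 'P] \isog [set: 'Z_2 * 'Z_2].

Definition is_edge (s : {set V}) : bool :=
  [exists x, exists y, e x y && (s == [set x; y])].

Definition cycle_face (f : {set {set V}}) : Prop :=
  exists c : seq V, [/\ uniq c, 2 < size c, path.cycle e c &
                       f = [set [set x; next c x] | x in c]].

Definition link_rel (F : {set {set {set V}}}) (v : V) : rel {set V} :=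
  fun a b => [&& v \in a, v \in b, is_edge a, is_edge b &
                [exists f in F, (a \in f) && (b \in f)]].

(* Polytopal map with underlying graph (V, e): faces are cycles, every edge
   lies in exactly two faces, the faces around every vertex form a single
   cycle (so the result is a closed surface), and the graph is connected. *)
Definition is_map (F : {set {set {set V}}}) : Prop :=
  [/\ connected_graph,
      forall f, f \in F -> cycle_face f,
      forall s, is_edge s -> #|[set f in F | s \in f]| = 2 &
      forall v a b, is_edge a -> is_edge b -> v \in a -> v \in b ->
        connect (link_rel F v) a b].

Definition act_edge (g : {perm V}) (s : {set V}) : {set V} := g @: s.
Definition act_face (g : {perm V}) (f : {set {set V}}) : {set {set V}} :=
  act_edge g @: f.

Definition map_aut (F : {set {set {set V}}}) : {set {perm V}} :=
  [set g in graph_aut | act_face g @: F == F].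

Definition flagT := (V * {set V} * {set {set V}})%type.
Definition is_flag (F : {set {set {set V}}}) (t : flagT) : bool :=
  [&& t.1.1 \in t.1.2, is_edge t.1.2, t.1.2 \in t.2 & t.2 \in F].
Definition act_flag (g : {perm V}) (t : flagT) : flagT :=
  (g t.1.1, act_edge g t.1.2, act_face g t.2).
Definition same_orbit (F : {set {set {set V}}}) (t u : flagT) : Prop :=
  exists2 g, g \in map_aut F & act_flag g t = u.

(* u = t^i : the flag differing from t exactly in component i. *)
Definition adj0 (t u : flagT) : Prop :=
  [/\ u.1.1 <> t.1.1, u.1.2 = t.1.2 & u.2 = t.2].
Definition adj1 (t u : flagT) : Prop :=
  [/\ u.1.1 = t.1.1, u.1.2 <> t.1.2 & u.2 = t.2].
Definition adj2 (t u : flagT) : Prop :=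
  [/\ u.1.1 = t.1.1, u.1.2 = t.1.2 & u.2 <> t.2].

Definition class2_01 (F : {set {set {set V}}}) : Prop :=
  [/\ (exists t1 t2, [/\ is_flag F t1, is_flag F t2, ~ same_orbit F t1 t2 &
        forall t, is_flag F t -> same_orbit F t1 t \/ same_orbit F t2 t]),
      (forall t u, is_flag F t -> is_flag F u -> adj0 t u -> same_orbit F t u),
      (forall t u, is_flag F t -> is_flag F u -> adj1 t u -> same_orbit F t u) &
      (forall t u, is_flag F t -> is_flag F u -> adj2 t u -> ~ same_orbit F t u)].

Definition map_iso (F1 F2 : {set {set {set V}}}) : Prop :=
  exists2 g, g \in graph_aut & act_face g @: F1 = F2.

End MapDefs.

From mathcomp Require Import all_boot all_fingroup zmodp.
From mathcomp Require Import abelian sylow.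
Set Implicit Arguments. Unset Strict Implicit. Unset Printing Implicit Defensive.
Local Open Scope group_scope.

(* Fix an arc (v0, x0) and the automorphism s swapping its ends.  In a map of class
   2_{0,1}, the automorphisms realizing the 1-adjacency at the two flags (v0, E0, f) are
   involutions p, q fixing v0 and exchanging the two edges at v0 of the face f; each face
   through E0 is then the orbit of E0 under the rotation p * s, resp. q * s, and the map
   consists of the translates of these two faces.  By arc-regularity the stabilizer of v0
   acts regularly on the four neighbours of v0, so it is {1, p, q, pq}, abelian of order 4
   and generated by involutions: the Klein group.  Conversely, any two of the three involutions a, b, ab of
   a Klein stabilizer build such a map, and the pair is recovered from the faces through
   E0, which gives exactly three maps up to isomorphism. *)

Lemma klein_abelem : 2.-abelem [set: 'Z_2 * 'Z_2].
Proof.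
rewrite abelemE //; apply/andP; split.
  by apply/centsP => -[a b] _ [c d] _; congr pair; apply: Zp_addC.
by apply/exponentP => -[[[|[|//]] ?] [[|[|//]] ?]] _; apply/eqP.
Qed.

Lemma card_klein : #|[set: 'Z_2 * 'Z_2]| = 4.
Proof. by rewrite cardsT card_prod card_ord. Qed.

Lemma isog_klein (gT : finGroupType) (K : {group gT}) :
  K \isog [set: 'Z_2 * 'Z_2] <-> #|K| = 4 /\ {in K, forall k, k * k = 1}.
Proof.
split=> [isoK | [cardK sqK]].
  split; first by rewrite (card_isog isoK) card_klein.
  have /abelemP[//|_ sqK] : 2.-abelem K by rewrite (isog_abelem isoK) klein_abelem.
  by move=> k /sqK; rewrite expgS expg1.
have abK : abelian K by apply: (@card_p2group_abelian _ 2); rewrite ?cardK.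
have abelK : 2.-abelem K.
  by apply/abelemP => //; split=> // k Kk; rewrite expgS expg1 sqK.
by rewrite (isog_abelem_card _ abelK) klein_abelem card_klein cardK.
Qed.

Section MapAutomorphisms.
Variables (V : finType) (e : rel V).
Implicit Types (g h : {perm V}) (x y : V) (E : {set V}) (f : {set {set V}})
  (F : {set {set {set V}}}) (t u : flagT V).
Local Notation G := (graph_aut e).

Lemma act_edge2 g x y : act_edge g [set x; y] = [set g x; g y].
Proof. by rewrite /act_edge imsetU1 imset_set1. Qed.

Lemma act_edge1 E : act_edge 1 E = E.
Proof. exact: (act1 'P^*). Qed.

Lemma act_edgeM g h E : act_edge (g * h) E = act_edge h (act_edge g E).
Proof. exact: (actM 'P^*). Qed.

Lemma act_edge_inj g : injective (act_edge g).
Proof. exact: (act_inj 'P^*). Qed.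

Lemma act_edgeK g : cancel (act_edge g) (act_edge g^-1).
Proof. exact: (actK 'P^*). Qed.

Lemma mem_act_edge g x E : (g x \in act_edge g E) = (x \in E).
Proof. exact/mem_imset/perm_inj. Qed.

Lemma act_face1 f : act_face 1 f = f.
Proof. exact: (act1 'P^*^*). Qed.

Lemma act_faceM g h f : act_face (g * h) f = act_face h (act_face g f).
Proof. exact: (actM 'P^*^*). Qed.

Lemma act_face_inj g : injective (act_face g).
Proof. exact: (act_inj 'P^*^*). Qed.

Lemma act_faceK g : cancel (act_face g) (act_face g^-1).
Proof. exact: (actK 'P^*^*). Qed.

Lemma act_faceKV g : cancel (act_face g^-1) (act_face g).
Proof. exact: (actKV 'P^*^*). Qed.

Lemma mem_act_face g E f : (act_edge g E \in act_face g f) = (E \in f).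
Proof. exact/mem_imset/act_edge_inj. Qed.

Lemma graph_autE g x y : g \in G -> e (g x) (g y) = e x y.
Proof. by rewrite inE => /forallP/(_ x)/forallP/(_ y)/eqP. Qed.

Lemma is_edgeP E : reflect (exists x y, e x y /\ E = [set x; y]) (is_edge e E).
Proof.
apply: (iffP existsP) => [[x /existsP[y /andP[exy /eqP ->]]] | [x [y [exy ->]]]].
  by exists x, y.
by exists x; apply/existsP; exists y; rewrite exy eqxx.
Qed.

Lemma is_edge2 x y : e x y -> is_edge e [set x; y].
Proof. by move=> exy; apply/is_edgeP; exists x, y. Qed.

Lemma map_aut_graph F g : g \in map_aut e F -> g \in G.
Proof. by rewrite inE => /andP[]. Qed.

Lemma map_aut_faces F g : g \in map_aut e F -> act_face g @: F = F.
Proof. by rewrite inE => /andP[_ /eqP]. Qed.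

Lemma map_aut_group_set F : group_set (map_aut e F).
Proof.
apply/group_setP; split.
  by rewrite inE group1 (eq_imset _ act_face1) imset_id eqxx.
move=> g h Ag Ah; rewrite inE groupM ?(map_aut_graph Ag) ?(map_aut_graph Ah) //=.
by rewrite (eq_imset _ (act_faceM g h)) imset_comp !map_aut_faces.
Qed.

Canonical map_aut_group F := Group (map_aut_group_set F).

Lemma mem_map_aut F g f : g \in map_aut e F -> (act_face g f \in F) = (f \in F).
Proof. by move=> /map_aut_faces gF; rewrite -{1}gF mem_imset //; apply: act_face_inj. Qed.

Lemma act_flag1 t : act_flag 1 t = t.
Proof. by case: t => [[x E] f]; rewrite /act_flag /= perm1 act_edge1 act_face1. Qed.

Lemma act_flagM g h t : act_flag (g * h) t = act_flag h (act_flag g t).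
Proof. by case: t => [[x E] f]; rewrite /act_flag /= permM act_edgeM act_faceM. Qed.

Lemma same_orbit_sym F t u : same_orbit e F t u -> same_orbit e F u t.
Proof.
case=> g Ag <-; exists g^-1; rewrite ?groupV //.
by rewrite -act_flagM mulgV act_flag1.
Qed.

Lemma same_orbit_trans F t u w :
  same_orbit e F t u -> same_orbit e F u w -> same_orbit e F t w.
Proof. by case=> g Ag <- [h Ah <-]; exists (g * h); rewrite ?groupM ?act_flagM. Qed.

Lemma same_orbit_act F g t u : g \in map_aut e F ->
  same_orbit e F (act_flag g t) (act_flag g u) <-> same_orbit e F t u.
Proof.
move=> Ag; have orb_g w : same_orbit e F w (act_flag g w) by exists g.
split=> [orb_gtu | orb_tu].
  apply: same_orbit_trans (orb_g t) _.
  exact/(same_orbit_trans orb_gtu)/same_orbit_sym.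
exact/(same_orbit_trans (same_orbit_sym (orb_g t)))/(same_orbit_trans orb_tu).
Qed.

Lemma link_rel_sym F v : symmetric (link_rel e F v).
Proof.
move=> a b; apply/and5P/and5P => -[va vb ea eb /existsP[f /and3P[Ff af bf]]];
  by split=> //; apply/existsP; exists f; rewrite Ff af bf.
Qed.

Lemma map_iso_refl F : map_iso e F F.
Proof. by exists 1; rewrite ?group1 // (eq_imset _ act_face1) imset_id. Qed.

End MapAutomorphisms.

Lemma set2_injr (T : finType) (a b c : T) : [set a; b] = [set a; c] -> b = c.
Proof.
move=> abc; have /set2P[ba|//] : b \in [set a; c] by rewrite -abc set22.
by have /set2P[->|//] : c \in [set a; b] by rewrite abc set22.
Qed.

Lemma set2_eq_cases (T : finType) (a b c d : T) : [set a; b] = [set c; d] ->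
  (a = c /\ b = d) \/ (a = d /\ b = c).
Proof.
move=> abcd; have /set2P[ac|ad] : a \in [set c; d] by rewrite -abcd set21.
  by left; split=> //; apply: (@set2_injr _ a); rewrite abcd ac.
by right; split=> //; apply: (@set2_injr _ a); rewrite abcd setUC ad.
Qed.

Section CycleEdges.
Variables (V : finType) (e : rel V).
Hypothesis e_irr : irreflexive e.
Implicit Types (g : {perm V}) (x y : V) (E : {set V}) (c : seq V).

Definition cycle_edges c : {set {set V}} := [set [set x; next c x] | x in c].

Lemma next_next_neq c x : uniq c -> 2 < size c -> x \in c -> next c (next c x) != x.
Proof.
move=> uc sc cx; case: (rot_to cx) => i q rot_c.
have uq : uniq (x :: q) by rewrite -rot_c rot_uniq.
have sq : 2 < size (x :: q) by rewrite -rot_c size_rot.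
rewrite -!(next_rot i uc) rot_c.
case: q uq sq {rot_c} => [|a [|b r]] //= + _.
rewrite !inE !negb_or => /and4P[/and3P[xa xb _] _ _ _].
by rewrite eqxx (eq_sym a) (negbTE xa) eqxx eq_sym.
Qed.

Section OneCycle.
Variable c : seq V.
Hypotheses (uc : uniq c) (sc : 2 < size c) (ec : path.cycle e c).

Lemma cycle_edges_vertex E x : E \in cycle_edges c -> x \in E -> x \in c.
Proof. by case/imsetP => y cy -> /set2P[->|->] //; rewrite mem_next. Qed.

Lemma cycle_edges_next x : x \in c -> [set x; next c x] \in cycle_edges c.
Proof. exact: imset_f. Qed.

Lemma cycle_edges_prev x : x \in c -> [set prev c x; x] \in cycle_edges c.
Proof. by move=> cx; apply/imsetP; exists (prev c x); rewrite ?mem_prev ?next_prev. Qed.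

Lemma cycle_edges_edge E : E \in cycle_edges c -> is_edge e E.
Proof. by case/imsetP => x cx ->; apply/is_edge2/(next_cycle ec). Qed.

Lemma cycle_edges_at x E : x \in c -> E \in cycle_edges c -> x \in E ->
  E = [set x; next c x] \/ E = [set prev c x; x].
Proof.
move=> cx /imsetP[y cy ->] /set2P[<-|xn]; first by left.
by right; rewrite xn prev_next.
Qed.

Lemma cycle_edges_next_prev x : x \in c -> [set x; next c x] != [set prev c x; x].
Proof.
move=> cx; apply/eqP => /set2_eq_cases[[_ nx] | [_ nx]].
  by have := next_cycle ec cx; rewrite nx e_irr.
by have := next_next_neq uc sc cx; rewrite nx next_prev ?eqxx.
Qed.

Lemma cycle_edges_other E x : E \in cycle_edges c -> x \in E ->
  exists E', [/\ E' \in cycle_edges c, x \in E', E' != E &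
    forall E'', E'' \in cycle_edges c -> x \in E'' -> E'' = E \/ E'' = E'].
Proof.
move=> cE xE; have cx := cycle_edges_vertex cE xE.
have np := cycle_edges_next_prev cx.
case: (cycle_edges_at cx cE xE) => ->.
  exists [set prev c x; x]; split; rewrite ?set22 ?cycle_edges_prev 1?eq_sym //.
  by move=> E''; apply: cycle_edges_at.
exists [set x; next c x]; split; rewrite ?set21 ?cycle_edges_next //.
by move=> E'' cE'' xE''; case: (cycle_edges_at cx cE'' xE''); [right | left].
Qed.

End OneCycle.

Lemma cycle_edges_sub_eq c c' : uniq c -> 2 < size c -> path.cycle e c ->
  uniq c' -> 2 < size c' -> path.cycle e c' ->
  cycle_edges c \subset cycle_edges c' -> cycle_edges c = cycle_edges c'.
Proof.
move=> uc sc ec uc' sc' ec' /subsetP cc'.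
have next_edge y : y \in c -> y \in c' -> [set y; next c' y] \in cycle_edges c.
  move=> cy c'y; have N := cycle_edges_next cy; have P := cycle_edges_prev uc cy.
  have [] := cycle_edges_at uc' c'y (cc' _ N) (set21 _ _);
  have [] := cycle_edges_at uc' c'y (cc' _ P) (set22 _ _);
  move=> P' N'; rewrite -?P' -?N' //.
  by have := cycle_edges_next_prev uc sc ec cy; rewrite N' P' eqxx.
have sub_c' y : y \in c' -> y \in c.
  have [x0 cx0] : exists x, x \in c by case: (c) sc => [|x r] //; exists x; rewrite inE eqxx.
  have c'x0 : x0 \in c'.
    by apply: (cycle_edges_vertex (cc' _ (cycle_edges_next cx0))); rewrite set21.
  rewrite -(fconnect_cycle (cycle_next uc') c'x0) => /connectP[p + ->].
  elim: p x0 cx0 c'x0 => [//|z p IHp] x cx c'x /= /andP[/eqP <- nx_p].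
  apply: IHp nx_p; last by rewrite mem_next.
  by apply: (cycle_edges_vertex (next_edge _ cx c'x)); rewrite set22.
apply/eqP; rewrite eqEsubset; apply/andP; split; first exact/subsetP.
by apply/subsetP => _ /imsetP[y c'y ->]; apply: next_edge; rewrite ?sub_c'.
Qed.

Lemma cycle_edges_act g c : g \in graph_aut e -> uniq c -> 2 < size c -> path.cycle e c ->
  [/\ uniq (map g c), 2 < size (map g c), path.cycle e (map g c) &
      act_face g (cycle_edges c) = cycle_edges (map g c)].
Proof.
move=> Gg uc sc ec; split; rewrite ?map_inj_uniq ?size_map //; try exact: perm_inj.
  by rewrite cycle_map; apply: sub_cycle ec => x y /=; rewrite graph_autE.
have g_inj := @perm_inj _ g.
apply/setP => E; apply/imsetP/imsetP => [[_ /imsetP[x cx ->] ->] | [_ /mapP[x cx ->] ->]].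
  by exists (g x); [exact: map_f | rewrite act_edge2 next_map].
by exists [set x; next c x]; [exact: imset_f | rewrite act_edge2 next_map].
Qed.

End CycleEdges.

Section ArcRegularGraph.
Variables (V : finType) (e : rel V).
Hypotheses (e_simple : simple_graph e) (e_tetra : tetravalent e) (e_arc : arc_regular e).
Local Notation G := (graph_aut e).
Implicit Types (g h k : {perm V}) (x y v w : V) (E : {set V}) (f : {set {set V}})
  (F : {set {set {set V}}}).

Lemma edge_sym x y : e x y = e y x.
Proof. by case: e_simple => esym _; apply: esym. Qed.

Lemma edge_irr : irreflexive e.
Proof. by case: e_simple. Qed.

Lemma edge_neq x y : e x y -> x != y.
Proof. by apply: contraTneq => ->; rewrite edge_irr. Qed.

Lemma arc_aut_eq x y g h : e x y -> g \in G -> h \in G ->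
  g x = h x -> g y = h y -> g = h.
Proof.
move=> exy Gg Gh gx gy; have eg : e (g x) (g y) by rewrite graph_autE.
have /eqP/cards1P[k Ak] := e_arc exy eg.
have : g \in [set k] by rewrite -Ak inE Gg !eqxx.
have : h \in [set k] by rewrite -Ak inE Gh -gx -gy !eqxx.
by rewrite !inE => /eqP-> /eqP->.
Qed.

Lemma arc_aut_exists x y x' y' : e x y -> e x' y' ->
  exists2 g, g \in G & g x = x' /\ g y = y'.
Proof.
move=> exy exy'; have /eqP/cards1P[k Ak] := e_arc exy exy'.
have : k \in [set k] by rewrite inE.
by rewrite -Ak inE => /andP[Gk /andP[/eqP ? /eqP ?]]; exists k.
Qed.

Lemma neighbor_exists v : exists y, e v y.
Proof.
have : 0 < #|[set w | e v w]| by rewrite e_tetra.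
by case/card_gt0P => y; rewrite inE; exists y.
Qed.

Lemma edge_at v E : is_edge e E -> v \in E -> exists y, e v y /\ E = [set v; y].
Proof.
case/is_edgeP => x [y [exy ->]] /set2P[->|->]; first by exists y.
by exists x; rewrite edge_sym setUC.
Qed.

Lemma base_arc_exists v : exists x, exists2 s, e v x & [/\ s \in G, s v = x & s x = v].
Proof.
have [x evx] := neighbor_exists v.
have [s Gs [sv sx]] := arc_aut_exists evx (etrans (edge_sym x v) evx).
by exists x, s.
Qed.

Section BaseArc.
Variables (v0 x0 : V) (s : {perm V}).
Hypotheses (ev0x0 : e v0 x0) (Gs : s \in G) (sv0 : s v0 = x0) (sx0 : s x0 = v0).
Local Notation E0 := [set v0; x0].
Local Notation K := 'C_(G)[v0 | 'P].

Lemma s_involutive : involutive s.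
Proof.
move=> y; rewrite -permM; suff -> : s * s = 1 by rewrite perm1.
by apply: (arc_aut_eq ev0x0); rewrite ?groupM ?perm1 ?permM ?sv0 ?sx0.
Qed.

Lemma stabilizerE k : (k \in K) = (k \in G) && (k v0 == v0).
Proof. by rewrite !inE sub1set inE. Qed.

Lemma stabilizer_eq g h : g \in G -> h \in G -> g v0 = v0 -> h v0 = v0 ->
  g x0 = h x0 -> g = h.
Proof. by move=> Gg Gh gv0 hv0; apply: (arc_aut_eq ev0x0); rewrite ?gv0. Qed.

Lemma stabilizer_onto_neighbor y : e v0 y -> exists2 k, k \in G & k v0 = v0 /\ k x0 = y.
Proof. by move=> ev0y; have [k Gk [kv0 kx0]] := arc_aut_exists ev0x0 ev0y; exists k. Qed.

Lemma card_stabilizer : #|K| = 4.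
Proof.
rewrite -(e_tetra v0); have -> : [set w | e v0 w] = (fun k => k x0) @: K.
  apply/setP => y; rewrite inE; apply/idP/imsetP => [|[k]].
    case/stabilizer_onto_neighbor => k Gk [kv0 <-].
    by exists k; rewrite // stabilizerE Gk kv0 eqxx.
  by rewrite stabilizerE => /andP[Gk /eqP kv0] ->; rewrite -{1}kv0 graph_autE.
apply/esym/card_in_imset => g h; rewrite !stabilizerE => /andP[Gg /eqP gv0] /andP[Gh /eqP hv0].
exact: stabilizer_eq.
Qed.

Lemma graph_aut_gen (H : {group {perm V}}) : connected_graph e ->
  H \subset G -> K \subset H -> s \in H -> G \subset H.
Proof.
move=> e_conn /subsetP HG /subsetP KH Hs.
pose R := [pred w | [exists h in H, h v0 == w]].
have R_step x y : e x y -> x \in R -> y \in R.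
  move=> exy /existsP[h /andP[Hh /eqP hv0]].
  have ev0 : e v0 (h^-1 y) by rewrite -(graph_autE _ _ (HG _ Hh)) permKV hv0.
  have [k Gk [kv0 kx0]] := stabilizer_onto_neighbor ev0.
  have Kk : k \in K by rewrite stabilizerE Gk kv0 eqxx.
  apply/existsP; exists (s * k * h); rewrite !groupM ?Hs ?Hh ?KH //=.
  by rewrite !permM sv0 kx0 permKV.
have R_closed : closed e R.
  by move=> a b eab; apply/idP/idP; apply: R_step; rewrite // edge_sym.
have R_all w : w \in R.
  rewrite -(closed_connect R_closed (e_conn v0 w)).
  by rewrite inE; apply/existsP; exists 1; rewrite group1 perm1 eqxx.
apply/subsetP => g Gg; have /existsP[h /andP[Hh /eqP hv0]] := R_all (g v0).
have Kgh : g * h^-1 \in K.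
  by rewrite stabilizerE groupM ?groupV ?Gg ?HG //= permM -hv0 permK.
by rewrite -(mulgKV h g) groupM // KH.
Qed.

Lemma edge_transitive E : is_edge e E -> exists2 h, h \in G & E = act_edge h E0.
Proof.
case/is_edgeP => x [y [exy ->]]; have [h Gh [hv0 hx0]] := arc_aut_exists ev0x0 exy.
by exists h; rewrite // act_edge2 hv0 hx0.
Qed.

Definition corner_reflection p := [/\ p \in G, p v0 = v0, involutive p & p x0 != x0].

(* p * s rotates the face through E0 whose reflections are p, fixing the corner v0,
   and s, fixing the edge E0. *)
Definition face_cycle p := fingraph.orbit (p * s) v0.

Definition face p := cycle_edges (face_cycle p).

Section Face.
Variable p : {perm V}.
Hypothesis p_refl : corner_reflection p.
Let Gp : p \in G. Proof. by case: p_refl. Qed.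
Let pv0 : p v0 = v0. Proof. by case: p_refl. Qed.
Let pp : involutive p. Proof. by case: p_refl. Qed.
Let px0 : p x0 != x0. Proof. by case: p_refl. Qed.
Local Notation rho := (p * s).
Local Notation c := (face_cycle p).

Let rhoE y : rho y = s (p y). Proof. by rewrite permM. Qed.
Let G_rho : rho \in G. Proof. by rewrite groupM. Qed.

Let c_fcycle : fcycle rho c.
Proof. exact: cycle_orbit (@perm_inj _ rho) v0. Qed.

Lemma face_cycle_ind (P : V -> Prop) : P v0 -> (forall y, P y -> P (rho y)) ->
  forall y, y \in c -> P y.
Proof.
move=> P0 PS y; rewrite /face_cycle -fconnect_orbit => /iter_findex <-.
by elim: findex => //= n IHn; apply: PS.
Qed.

Let next_c y : y \in c -> next c y = rho y.
Proof. by move=> cy; apply: nextE cy; exact: c_fcycle. Qed.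

Let mem_c_rho y : (rho y \in c) = (y \in c).
Proof.
rewrite /face_cycle -!fconnect_orbit; apply/idP/idP => [|cy]; last first.
  exact: connect_trans cy (fconnect1 _ _).
by move/connect_trans; apply; rewrite (fconnect_sym (@perm_inj _ rho)) fconnect1.
Qed.

Let c_v0 : v0 \in c. Proof. exact: in_orbit. Qed.
Let rho_v0 : rho v0 = x0. Proof. by rewrite rhoE pv0. Qed.
Let rho_px0 : rho (p x0) = v0. Proof. by rewrite rhoE pp. Qed.
Let c_x0 : x0 \in c. Proof. by rewrite -rho_v0 mem_c_rho. Qed.
Let c_px0 : p x0 \in c. Proof. by rewrite -mem_c_rho rho_px0. Qed.

Let c_edge y : y \in c -> e y (rho y).
Proof.
move: y; apply: (face_cycle_ind (P := fun y => e y (rho y))); first by rewrite rho_v0.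
by move=> y eyr; rewrite graph_autE.
Qed.

Let size_c : 2 < size c.
Proof.
have spx0_v0 : s (p x0) != v0 by rewrite -sx0 (inj_eq (@perm_inj _ s)).
have spx0_x0 : s (p x0) != x0.
  apply/eqP => /(congr1 s); rewrite s_involutive sx0 => pv.
  by have := ev0x0; rewrite -(graph_autE _ _ Gp) pv0 pv edge_irr.
have : uniq [:: v0; x0; s (p x0)].
  by rewrite /= !inE !negb_or !andbT edge_neq // ![_ == s (p x0)]eq_sym spx0_v0 spx0_x0.
move/uniq_leq_size => /(_ c) /=; apply=> z; rewrite !inE.
by case/or3P => /eqP->; rewrite -?rhoE ?mem_c_rho.
Qed.

Lemma face_is_cycle : cycle_face e (face p).
Proof.
exists c; split; rewrite ?orbit_uniq //.
apply: (@sub_in_cycle _ (mem c) (frel rho)) c_fcycle; last exact/allP.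
by move=> x y cx _ /eqP <-; apply: c_edge.
Qed.

Lemma mem_face E : reflect (exists2 y, y \in c & E = [set y; rho y]) (E \in face p).
Proof. by apply: (iffP imsetP) => -[y cy ->]; exists y; rewrite ?next_c. Qed.

Lemma face_E0 : E0 \in face p.
Proof. by apply/mem_face; exists v0; rewrite ?rho_v0. Qed.

Lemma face_E1 : [set v0; p x0] \in face p.
Proof. by apply/mem_face; exists (p x0); rewrite ?rho_px0 1?setUC. Qed.

Lemma face_at_v0 E : E \in face p -> v0 \in E -> E = E0 \/ E = [set v0; p x0].
Proof.
case/mem_face => y cy -> /set2P[<- | v0r]; first by left; rewrite rho_v0.
have -> : y = p x0 by apply: (@perm_inj _ rho); rewrite rho_px0.
by right; rewrite rho_px0 setUC.
Qed.

Let face_reversal g : g \in G -> g v0 \in c -> (forall y, rho (g (rho y)) = g y) ->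
  act_face g (face p) = face p.
Proof.
move=> Gg gv0 grev.
have gc y : y \in c -> g y \in c.
  by apply: (face_cycle_ind (P := fun y => g y \in c)) => // z gz; rewrite -mem_c_rho grev.
apply/eqP; rewrite eqEcard (card_imset _ (@act_edge_inj _ g)) leqnn andbT.
apply/subsetP => _ /imsetP[_ /mem_face[y cy ->] ->].
by apply/mem_face; exists (g (rho y)); rewrite ?gc ?mem_c_rho // act_edge2 grev setUC.
Qed.

Lemma face_act_s : act_face s (face p) = face p.
Proof. by apply: face_reversal; rewrite // ?sv0 // => y; rewrite !rhoE s_involutive pp. Qed.

Lemma face_act_p : act_face p (face p) = face p.
Proof. by apply: face_reversal; rewrite // ?pv0 // => y; rewrite !rhoE pp s_involutive. Qed.

Let face_act_rho : act_face rho (face p) = face p.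
Proof. by rewrite act_faceM face_act_p face_act_s. Qed.

(* The rotations act transitively on the edges of face p, so an automorphism moving one
   of them onto E0 stabilizes face p up to the flip s. *)
Lemma face_stable g : g \in G -> E0 \in act_face g (face p) ->
  act_face g (face p) = face p.
Proof.
move=> Gg /imsetP[_ /mem_face[y cy ->]]; rewrite act_edge2 => /esym gE0.
have c_trans z : z \in c -> exists2 r, r \in G &
    [/\ act_face r (face p) = face p, r z = v0 & r (rho z) = x0].
  move: z; apply: face_cycle_ind; first by exists 1; rewrite ?act_face1 ?perm1.
  move=> z [r Gr [rf rz rrz]]; exists (rho^-1 * r); rewrite ?groupM ?groupV //.
  by rewrite act_faceM -{1}face_act_rho act_faceK rf !(permM rho^-1) !permK.
have [r Gr [rf ry rry]] := c_trans y cy.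
have eyr := c_edge cy.
case: (set2_eq_cases gE0) => -[gy gry].
  by have -> : g = r by apply: (arc_aut_eq eyr); rewrite ?ry ?rry.
have -> : g = r * s^-1.
  apply/(canRL (mulgK s))/(arc_aut_eq eyr); rewrite ?groupM //.
  by rewrite permM gy sx0 ry.
  by rewrite (permM g s) gry sv0 rry.
by rewrite act_faceM rf -{1}face_act_s act_faceK.
Qed.

End Face.

Lemma face_inj p q : corner_reflection p -> corner_reflection q -> face p = face q -> p = q.
Proof.
move=> p_refl q_refl pq; have E1q : [set v0; p x0] \in face q by rewrite -pq face_E1.
have [[Gp pv0 _ px0] [Gq qv0 _ _]] := (p_refl, q_refl).
case: (face_at_v0 q_refl E1q (set21 _ _)) => /set2_injr pqx0; last exact: stabilizer_eq.
by rewrite pqx0 eqxx in px0.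
Qed.

Lemma neighbors_v0 p q : corner_reflection p -> corner_reflection q -> p != q ->
  [set w | e v0 w] = [set x0; p x0; q x0; q (p x0)].
Proof.
move=> [Gp pv0 pp px0] [Gq qv0 qq qx0] pq.
have pqx0 : p x0 != q x0 by apply: contra pq => /eqP/stabilizer_eq->.
have ev0_k k : k \in G -> k v0 = v0 -> e v0 (k x0).
  by move=> Gk kv0; rewrite -{1}kv0 graph_autE.
have ev0_px0 := ev0_k _ Gp pv0.
have qpx0_x0 : q (p x0) != x0 by rewrite -{2}[x0]qq (inj_eq (@perm_inj _ q)).
have qpx0_px0 : q (p x0) != p x0.
  apply: contra qx0 => /eqP qpx0; apply/eqP.
  by rewrite (arc_aut_eq ev0_px0 Gq (group1 _)) ?perm1.
have uniq4 : uniq [:: x0; p x0; q x0; q (p x0)].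
  rewrite /= !inE !negb_or !andbT (inj_eq (@perm_inj _ q)) eq_sym px0 pqx0.
  by rewrite ![_ == q (p x0)]eq_sym qpx0_x0 qpx0_px0 eq_sym qx0.
apply/eqP; rewrite eq_sym eqEcard; apply/andP; split.
  apply/subsetP => y; rewrite !inE -!orbA => /or4P[] /eqP->;
    by rewrite ?ev0x0 ?ev0_k // -{1}qv0 graph_autE.
rewrite e_tetra -[4]/(size [:: x0; p x0; q x0; q (p x0)]) -(card_uniqP uniq4).
by apply/eq_leq/eq_card => y; rewrite !inE -!orbA.
Qed.

Lemma stabilizer_cases p q k : corner_reflection p -> corner_reflection q -> p != q ->
  k \in G -> k v0 = v0 -> [\/ k = 1, k = p, k = q | k = p * q].
Proof.
move=> p_refl q_refl pq Gk kv0; have [[Gp pv0 _ _] [Gq qv0 _ _]] := (p_refl, q_refl).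
have : k x0 \in [set w | e v0 w] by rewrite inE -{1}kv0 graph_autE.
rewrite (neighbors_v0 p_refl q_refl pq) !inE -!orbA.
case/or4P=> /eqP kx0; [constructor 1 | constructor 2 | constructor 3 | constructor 4];
  by apply: stabilizer_eq; rewrite ?group1 ?groupM ?perm1 ?permM ?pv0 ?qv0.
Qed.

Definition face_map p q : {set {set {set V}}} :=
  [set act_face g (face p) | g in G] :|: [set act_face g (face q) | g in G].

Section FaceMap.
Variables p q : {perm V}.
Hypotheses (p_refl : corner_reflection p) (q_refl : corner_reflection q) (pq : p != q).
Local Notation F := (face_map p q).

Lemma face_map_act h : h \in G -> act_face h @: F = F.
Proof.
move=> Gh; apply/eqP; rewrite eqEcard (card_imset _ (@act_face_inj _ h)) leqnn andbT.
apply/subsetP => _ /imsetP[f Ff ->]; rewrite inE.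
by case/setUP: Ff => /imsetP[g Gg ->]; rewrite -act_faceM; apply/orP;
  [left | right]; exact/imset_f/groupM.
Qed.

Lemma map_aut_face_map : map_aut e F = G.
Proof. by apply/setP => h; rewrite inE andb_idr // => /face_map_act->. Qed.

Let G_map_aut g : g \in G -> g \in map_aut e F.
Proof. by rewrite map_aut_face_map. Qed.

Let mem_F_act h f : h \in G -> (act_face h f \in F) = (f \in F).
Proof. by move/G_map_aut; apply: mem_map_aut. Qed.

Let face_reflection r : r = p \/ r = q -> corner_reflection r.
Proof. by case=> ->. Qed.

Let face_in_F r : r = p \/ r = q -> face r \in F.
Proof.
rewrite inE => r_pq; apply/orP; case: r_pq => ->; [left | right];
  by apply/imsetP; exists 1; rewrite ?act_face1.
Qed.

Lemma face_map_E0 f : f \in F -> E0 \in f -> f = face p \/ f = face q.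
Proof.
case/setUP => /imsetP[g Gg ->] E0f; [left | right]; exact: face_stable.
Qed.

Let face_p_neq_q : face p != face q.
Proof. by apply: contra pq => /eqP/(face_inj p_refl q_refl)->. Qed.

Lemma face_map_edge_count E : is_edge e E -> #|[set f in F | E \in f]| = 2.
Proof.
case/edge_transitive => h Gh ->.
have -> : [set f in F | act_edge h E0 \in f] = [set act_face h (face p); act_face h (face q)].
  apply/setP => f; rewrite inE; apply/andP/set2P => [[Ff hE0f] | ].
    have : E0 \in act_face h^-1 f by rewrite -(act_edgeK h E0) mem_act_face.
    have Ff' : act_face h^-1 f \in F by rewrite mem_F_act ?groupV.
    by case/(face_map_E0 Ff') => <-; rewrite act_faceKV; [left | right].
  by case=> ->; rewrite mem_act_face mem_F_act ?face_in_F ?face_E0; auto.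
by rewrite cards2 (inj_eq (@act_face_inj _ h)) face_p_neq_q.
Qed.

Lemma face_map_cycle f : f \in F -> cycle_face e f.
Proof.
have act_face_cycle r g : corner_reflection r -> g \in G -> cycle_face e (act_face g (face r)).
  move=> r_refl Gg; have [c [uc sc ec ->]] := face_is_cycle r_refl.
  by have [] := cycle_edges_act Gg uc sc ec; exists (map g c).
by case/setUP => /imsetP[g Gg ->]; apply: act_face_cycle.
Qed.

Lemma face_map_link w E1 E2 : is_edge e E1 -> is_edge e E2 -> w \in E1 -> w \in E2 ->
  connect (link_rel e F w) E1 E2.
Proof.
have [y ewy] := neighbor_exists w; have [h Gh [hv0 _]] := arc_aut_exists ev0x0 ewy.
pose N z := act_edge h [set v0; z].
have N_edge E : is_edge e E -> w \in E -> exists2 z, e v0 z & E = N z.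
  move=> edgeE wE; have [z [ewz ->]] := edge_at edgeE wE.
  exists (h^-1 z); first by rewrite -(graph_autE _ _ Gh) hv0 permKV.
  by rewrite /N act_edge2 hv0 permKV.
have link_N z1 z2 f : f \in F -> e v0 z1 -> e v0 z2 ->
    [set v0; z1] \in f -> [set v0; z2] \in f -> link_rel e F w (N z1) (N z2).
  move=> Ff ez1 ez2 z1f z2f; rewrite /link_rel /N !act_edge2 hv0 !set21 /=.
  apply/and3P; split; try by apply: is_edge2; rewrite -hv0 graph_autE.
  apply/existsP; exists (act_face h f).
  by rewrite mem_F_act // -hv0 -!act_edge2 !mem_act_face Ff z1f z2f.
have [[Gp pv0 _ _] [Gq qv0 _ _]] := (p_refl, q_refl).
have ev0 k z : k \in G -> k v0 = v0 -> e v0 z -> e v0 (k z).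
  by move=> Gk kv0 ez; rewrite -{1}kv0 graph_autE.
have hub z : e v0 z -> connect (link_rel e F w) (N x0) (N z).
  move=> ez; have : z \in [set u | e v0 u] by rewrite inE.
  rewrite (neighbors_v0 p_refl q_refl pq) !inE -!orbA => /or4P[] /eqP->; first exact: connect0.
  - by apply/connect1/(link_N _ _ (face p)); rewrite ?face_in_F ?ev0 ?face_E0 ?face_E1; auto.
  - by apply/connect1/(link_N _ _ (face q)); rewrite ?face_in_F ?ev0 ?face_E0 ?face_E1; auto.
  apply: (@connect_trans _ _ (N (q x0))); apply: connect1.
    by apply: (link_N _ _ (face q)); rewrite ?face_in_F ?ev0 ?face_E0 ?face_E1; auto.
  apply: (link_N _ _ (act_face q (face p))); rewrite ?mem_F_act ?face_in_F ?ev0; auto.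
    by rewrite -{1}qv0 -act_edge2 mem_act_face face_E0.
  by rewrite -{1}qv0 -act_edge2 mem_act_face face_E1.
move=> /N_edge + /N_edge + wE1 wE2 => /(_ wE1)[z1 ez1 ->] /(_ wE2)[z2 ez2 ->].
apply: connect_trans (hub _ ez2).
by rewrite (sym_connect_sym (@link_rel_sym _ _ _ _)) hub.
Qed.

Lemma face_map_is_map : connected_graph e -> is_map e F.
Proof.
split=> //; [exact: face_map_cycle | exact: face_map_edge_count | ].
by move=> w a b ea eb wa wb; apply: face_map_link.
Qed.

Lemma face_map_flag_base t : is_flag e F t -> exists2 g, g \in G &
  exists2 r, r = p \/ r = q & act_flag g t = (v0, E0, face r).
Proof.
case: t => [[w E] f] /and4P[/= wE edgeE Ef Ff].
have [y [ewy defE]] := edge_at edgeE wE.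
have [g Gg [gw gy]] := arc_aut_exists ewy ev0x0.
have gE : act_edge g E = E0 by rewrite defE act_edge2 gw gy.
have E0gf : E0 \in act_face g f by rewrite -gE mem_act_face.
have [gf|gf] := face_map_E0 (etrans (mem_F_act _ Gg) Ff) E0gf; exists g => //;
  [exists p; first by left | exists q; first by right]; by rewrite /act_flag /= gw gE gf.
Qed.

Let base_flag r : r = p \/ r = q -> is_flag e F (v0, E0, face r).
Proof.
move=> r_pq; apply/and4P; split; rewrite /= ?set21 ?is_edge2 ?face_in_F //.
exact: face_E0 (face_reflection r_pq).
Qed.

Let not_same_orbit_base : ~ same_orbit e F (v0, E0, face p) (v0, E0, face q).
Proof.
case=> g /map_aut_graph Gg; rewrite /act_flag /= act_edge2 => -[gv0 + gf].
rewrite gv0 => /set2_injr gx0.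
have g1 : g = 1 by apply: stabilizer_eq; rewrite ?group1 ?perm1.
by move: face_p_neq_q; rewrite -gf g1 act_face1 eqxx.
Qed.

Lemma face_map_two_orbits : exists t1 t2, [/\ is_flag e F t1, is_flag e F t2,
  ~ same_orbit e F t1 t2 &
  forall t, is_flag e F t -> same_orbit e F t1 t \/ same_orbit e F t2 t].
Proof.
exists (v0, E0, face p), (v0, E0, face q); split; rewrite ?base_flag; auto.
move=> t /face_map_flag_base[g Gg [r [] -> gt]]; [left | right];
  by apply: same_orbit_sym; exists g; rewrite ?gt ?G_map_aut.
Qed.

Lemma face_map_adj0 t u : is_flag e F t -> is_flag e F u -> adj0 t u -> same_orbit e F t u.
Proof.
case: t u => [[w E] f] [[w' E'] f'] tF /and4P[/= w'E _ _ _] [/= w'w E'E f'f].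
subst E' f'.
have [g Gg [r r_pq]] := face_map_flag_base tF; rewrite /act_flag /= => -[gw gE gf].
apply/(same_orbit_act _ _ (G_map_aut Gg)); rewrite /act_flag /= gw gE gf.
have -> : g w' = x0.
  have /set2P[gw'|//] : g w' \in E0 by rewrite -gE mem_act_edge.
  by case: w'w; apply: (@perm_inj _ g); rewrite gw gw'.
exists s; first exact: G_map_aut.
by rewrite /act_flag /= act_edge2 sv0 sx0 setUC (face_act_s (face_reflection r_pq)).
Qed.

Lemma face_map_adj1 t u : is_flag e F t -> is_flag e F u -> adj1 t u -> same_orbit e F t u.
Proof.
case: t u => [[w E] f] [[w' E'] f'] tF /and4P[/= wE' _ E'f _] [/= w'w E'E f'f].
subst w' f'.
have [g Gg [r r_pq]] := face_map_flag_base tF; rewrite /act_flag /= => -[gw gE gf].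
have r_refl := face_reflection r_pq; have [Gr rv0 _ _] := r_refl.
apply/(same_orbit_act _ _ (G_map_aut Gg)); rewrite /act_flag /= gw gE gf.
have -> : act_edge g E' = [set v0; r x0].
  have gE'r : act_edge g E' \in face r by rewrite -gf mem_act_face.
  have v0gE' : v0 \in act_edge g E' by rewrite -gw mem_act_edge.
  have [gE'|//] := face_at_v0 r_refl gE'r v0gE'.
  by case: E'E; apply: (@act_edge_inj _ g); rewrite gE gE'.
exists r; first exact: G_map_aut.
by rewrite /act_flag /= act_edge2 rv0 (face_act_p r_refl).
Qed.

Lemma face_map_adj2 t u : is_flag e F t -> is_flag e F u -> adj2 t u -> ~ same_orbit e F t u.
Proof.
case: t u => [[w E] f] [[w' E'] f'] tF /and4P[/= _ _ Ef' f'F] [/= w'w E'E f'f].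
subst w' E'.
have [g Gg [r r_pq]] := face_map_flag_base tF; rewrite /act_flag /= => -[gw gE gf].
move/(same_orbit_act _ _ (G_map_aut Gg)); rewrite /act_flag /= gw gE gf.
have gf'F : act_face g f' \in F by rewrite mem_F_act.
have gf'r : act_face g f' != face r by rewrite -gf (inj_eq (@act_face_inj _ g)); apply/eqP.
have E0gf' : E0 \in act_face g f' by rewrite -gE mem_act_face.
have [gf'_eq|gf'_eq] := face_map_E0 gf'F E0gf'; rewrite gf'_eq in gf'r *;
  case: r_pq gf'r => ->; rewrite ?eqxx // => _.
by move/same_orbit_sym; apply: not_same_orbit_base.
Qed.

Lemma face_map_class2 : class2_01 e F.
Proof.
split; [exact: face_map_two_orbits | exact: face_map_adj0 | exact: face_map_adj1
  | exact: face_map_adj2].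
Qed.

End FaceMap.

Section Class2Map.
Variable F : {set {set {set V}}}.
Hypotheses (F_map : is_map e F) (F_class2 : class2_01 e F).

Definition corner_reflection_of f r :=
  [/\ r \in map_aut e F, corner_reflection r, act_face r f = f, [set v0; r x0] \in f &
      forall E, E \in f -> v0 \in E -> E = E0 \/ E = [set v0; r x0]].

Lemma faces_of_edge E f1 f2 f : is_edge e E -> f1 != f2 -> f1 \in F -> f2 \in F ->
  E \in f1 -> E \in f2 -> f \in F -> E \in f -> f = f1 \/ f = f2.
Proof.
case: F_map => _ _ F_count _ edgeE f12 Ff1 Ff2 Ef1 Ef2 Ff Ef.
have sub12 : [set f1; f2] \subset [set f in F | E \in f].
  by apply/subsetP => _ /set2P[]->; rewrite inE ?Ff1 ?Ff2 ?Ef1 ?Ef2.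
have card12 : #|[set f1; f2]| = #|[set f in F | E \in f]| by rewrite F_count // cards2 f12.
have := subset_cardP card12 sub12 f.
by rewrite !inE Ff Ef => /orP[]/eqP; auto.
Qed.

Let base_flag f : f \in F -> E0 \in f -> is_flag e F (v0, E0, f).
Proof. by move=> Ff E0f; apply/and4P; rewrite /= set21 is_edge2. Qed.

Lemma corner_reflection_exists f : f \in F -> E0 \in f -> exists r, corner_reflection_of f r.
Proof.
move=> Ff E0f; have [_ F_cycle _ _] := F_map; have [c [uc sc ec defc]] := F_cycle f Ff.
rewrite -/(cycle_edges c) in defc; rewrite defc in E0f; have [E1 [E1f v0E1 E10 atv0]] :=
  cycle_edges_other edge_irr uc sc ec E0f (set21 v0 x0).
have [y [ev0y defE1]] := edge_at (cycle_edges_edge ec E1f) v0E1.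
rewrite -defc in E0f E1f atv0.
have [_ _ adj1 _] := F_class2.
have [g Ag] : same_orbit e F (v0, E0, f) (v0, E1, f).
  apply: adj1; [exact: base_flag | | by split=> //; apply/eqP].
  by apply/and4P; split=> //=; rewrite defE1 is_edge2.
rewrite /act_flag /= act_edge2 => -[gv0 gE0 gf]; have Gg := map_aut_graph Ag.
have gx0 : g x0 = y by move: gE0; rewrite gv0 defE1 => /set2_injr.
have gE1 : act_edge g E1 = E0.
  have gE1f : act_edge g E1 \in f by rewrite -gf mem_act_face.
  have v0gE1 : v0 \in act_edge g E1 by rewrite -gv0 mem_act_edge.
  have [//|gE1_E1] := atv0 _ gE1f v0gE1.
  by case/eqP: E10; apply: (@act_edge_inj _ g); rewrite gE1_E1 act_edge2 gE0.
have gy : g y = x0 by move: gE1; rewrite defE1 act_edge2 gv0 => /set2_injr.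
have gg : involutive g.
  move=> z; rewrite -permM; suff -> : g * g = 1 by rewrite perm1.
  by apply: stabilizer_eq; rewrite ?groupM ?perm1 ?permM ?gv0 ?gx0.
exists g; split; rewrite ?gx0 -?defE1 //.
split=> //; rewrite gx0; apply: contra E10 => /eqP y_x0.
by rewrite defE1 y_x0.
Qed.

Lemma s_map_aut_stable f : f \in F -> E0 \in f -> s \in map_aut e F /\ act_face s f = f.
Proof.
move=> Ff E0f; have [_ adj0 _ _] := F_class2.
have [g Ag] : same_orbit e F (v0, E0, f) (x0, E0, f).
  apply: adj0; rewrite ?base_flag //; last by split=> //=; apply/eqP; rewrite eq_sym edge_neq.
  by apply/and4P; rewrite /= set22 is_edge2.
rewrite /act_flag /= act_edge2 => -[gv0 + gf]; rewrite gv0 => /esym.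
rewrite setUC => /set2_injr v0gx0.
suff -> : s = g by [].
by apply: (arc_aut_eq ev0x0); rewrite ?(map_aut_graph Ag) ?sv0 ?sx0 ?gv0.
Qed.

Lemma corner_reflections_neq f1 f2 p q : f1 != f2 -> f1 \in F -> f2 \in F ->
  E0 \in f1 -> E0 \in f2 -> corner_reflection_of f1 p -> corner_reflection_of f2 q ->
  p != q.
Proof.
move=> f12 Ff1 Ff2 E0f1 E0f2 [_ [Gp pv0 _ _] _ E1f1 at_f1] [_ _ _ E1f2 at_f2].
(* Otherwise E0 and [set v0; p x0] are the only edges at v0 of both faces through E0,
   and the link at v0 could not reach the other two edges. *)
apply/negP => /eqP eq_pq; rewrite -{}eq_pq in E1f2 at_f2.
pose S := [set E0; [set v0; p x0]].
have S_f12 A f : A \in S -> f \in F -> A \in f -> f = f1 \/ f = f2.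
  have E0_edge : is_edge e E0 by rewrite is_edge2.
  have E1_edge : is_edge e [set v0; p x0] by rewrite is_edge2 // -{1}pv0 graph_autE.
  by case/set2P=> -> Ff Af; apply: (faces_of_edge _ f12 Ff1 Ff2 _ _ Ff Af).
have S_step A B : A \in S -> link_rel e F v0 A B -> B \in S.
  move=> SA /and5P[_ v0B _ _ /existsP[f /and3P[Ff Af Bf]]].
  case: (S_f12 _ _ SA Ff Af) => eqf; rewrite eqf in Bf;
    [case: (at_f1 _ Bf v0B) | case: (at_f2 _ Bf v0B)] => ->; by rewrite !inE eqxx ?orbT.
have S_closed : closed (link_rel e F v0) S.
  move=> A B lAB; apply/idP/idP => [/S_step|]; first exact.
  by move/S_step; apply; rewrite link_rel_sym.
have [z + z_new] : exists2 z, z \in [set w | e v0 w] & z \notin [set x0; p x0].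
  apply/subsetPn; apply: contraTN isT => /subset_leq_card.
  by rewrite e_tetra cards2; case: (_ != _).
rewrite inE => ev0z.
have [_ _ _ F_link] := F_map.
have /(closed_connect S_closed) : connect (link_rel e F v0) E0 [set v0; z].
  by apply: F_link; rewrite ?set21 ?is_edge2.
rewrite set21 => /esym; rewrite !inE => /orP[]/eqP/set2_injr z_eq;
  by move: z_new; rewrite z_eq !inE eqxx ?orbT.
Qed.

Lemma face_of_corner_reflection f r : f \in F -> E0 \in f -> corner_reflection_of f r ->
  act_face s f = f -> f = face r.
Proof.
move=> Ff E0f [_ r_refl rf _ _] sf; have [_ F_cycle _ _] := F_map.
have [c [uc sc ec defc]] := F_cycle f Ff; rewrite -/(cycle_edges c) in defc.
have [c' [uc' sc' ec' defc']] := face_is_cycle r_refl; rewrite -/(cycle_edges c') in defc'.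
rewrite defc defc'; apply/esym/(cycle_edges_sub_eq edge_irr) => //.
have rsf : act_face (r * s) f = f by rewrite act_faceM rf sf.
rewrite -defc -defc'; apply/subsetP => _ /mem_face[y + ->].
move: y; apply: (face_cycle_ind (P := fun y => [set y; (r * s) y] \in f)).
  by rewrite permM; case: r_refl => _ -> _ _; rewrite sv0.
by move=> y yf; rewrite -act_edge2 -{1}rsf mem_act_face.
Qed.

Lemma class2_map_faces_E0 : exists p q,
  [/\ corner_reflection_of (face p) p, corner_reflection_of (face q) q, p != q &
      [set f in F | E0 \in f] = [set face p; face q]].
Proof.
have [_ _ F_count _] := F_map.
have /cards2P[f1 [f2 [f12 faces_E0]]] : #|[set f in F | E0 \in f]| == 2.
  by rewrite F_count ?is_edge2.
have /setIdP[Ff1 E0f1] : f1 \in [set f in F | E0 \in f] by rewrite faces_E0 set21.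
have /setIdP[Ff2 E0f2] : f2 \in [set f in F | E0 \in f] by rewrite faces_E0 set22.
have [p p_of] := corner_reflection_exists Ff1 E0f1.
have [q q_of] := corner_reflection_exists Ff2 E0f2.
have pq := corner_reflections_neq f12 Ff1 Ff2 E0f1 E0f2 p_of q_of.
have [_ sf1] := s_map_aut_stable Ff1 E0f1; have [_ sf2] := s_map_aut_stable Ff2 E0f2.
have f1p := face_of_corner_reflection Ff1 E0f1 p_of sf1.
have f2q := face_of_corner_reflection Ff2 E0f2 q_of sf2.
by subst f1 f2; exists p, q.
Qed.

Lemma graph_aut_sub_map_aut : G \subset map_aut e F.
Proof.
have [e_conn _ _ _] := F_map.
have [p [q [[Ap p_refl _ _ _] [Aq q_refl _ _ _] pq faces_E0]]] := class2_map_faces_E0.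
have /setIdP[Fp E0p] : face p \in [set f in F | E0 \in f] by rewrite faces_E0 set21.
have [As _] := s_map_aut_stable Fp E0p.
apply: (@graph_aut_gen (map_aut_group e F)) => //; apply/subsetP; first exact: map_aut_graph.
move=> k; rewrite stabilizerE => /andP[Gk /eqP kv0].
by case: (stabilizer_cases p_refl q_refl pq Gk kv0) => ->; rewrite ?group1 ?groupM.
Qed.

Lemma class2_map_face_map : exists p q,
  [/\ corner_reflection p, corner_reflection q, p != q & F = face_map p q].
Proof.
have [_ F_cycle _ _] := F_map; have /subsetP GA := graph_aut_sub_map_aut.
have [p [q [[_ p_refl _ _ _] [_ q_refl _ _ _] pq faces_E0]]] := class2_map_faces_E0.
have /setIdP[Fp _] : face p \in [set f in F | E0 \in f] by rewrite faces_E0 set21.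
have /setIdP[Fq _] : face q \in [set f in F | E0 \in f] by rewrite faces_E0 set22.
exists p, q; split=> //; apply/setP => f; apply/idP/idP => [Ff | ]; last first.
  by case/setUP => /imsetP[g Gg ->]; rewrite (mem_map_aut _ (GA g Gg)).
have [c [uc sc ec defc]] := F_cycle f Ff; rewrite -/(cycle_edges c) in defc.
have [x cx] : exists x, x \in c by case: (c) sc => [|x ?] //; exists x; rewrite inE eqxx.
have [h Gh E_hE0] := edge_transitive (cycle_edges_edge ec (cycle_edges_next cx)).
have : act_face h^-1 f \in [set f in F | E0 \in f].
  rewrite inE (mem_map_aut _ (GA _ (groupVr Gh))) Ff -(act_edgeK h E0) -E_hE0.
  by rewrite mem_act_face defc cycle_edges_next.
rewrite faces_E0 => /set2P[] hf; rewrite -(act_faceKV h f) hf inE; apply/orP.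
  by left; apply: imset_f.
by right; apply: imset_f.
Qed.

End Class2Map.

Lemma face_map_sym p q : face_map p q = face_map q p.
Proof. exact: setUC. Qed.

Lemma face_in_face_map r p q : corner_reflection r -> corner_reflection p ->
  corner_reflection q -> face r \in face_map p q -> r = p \/ r = q.
Proof.
move=> r_refl p_refl q_refl; have E0r := face_E0 r_refl.
case/setUP => /imsetP[h Gh fr]; rewrite fr in E0r; [left | right];
  by apply: face_inj; rewrite // fr face_stable.
Qed.

Lemma face_map_not_iso p q p' q' : corner_reflection p -> corner_reflection q ->
  corner_reflection p' -> corner_reflection q' -> p' != p -> p' != q ->
  ~ map_iso e (face_map p q) (face_map p' q').
Proof.
move=> p_refl q_refl p'_refl q'_refl p'p p'q [g Gg]; rewrite face_map_act // => pq_p'q'.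
have : face p' \in face_map p q.
  by rewrite pq_p'q' inE; apply/orP; left; apply/imsetP; exists 1; rewrite ?act_face1.
by case/face_in_face_map => // p'_eq; [move: p'p | move: p'q]; rewrite p'_eq eqxx.
Qed.

Lemma klein_of_corner_reflections p q : corner_reflection p -> corner_reflection q ->
  p != q -> K \isog [set: 'Z_2 * 'Z_2].
Proof.
move=> p_refl q_refl pq; have [[Gp pv0 pp _] [Gq qv0 qq _]] := (p_refl, q_refl).
have sqr_inv k : involutive k -> k * k = 1 by move=> kk; apply/permP => y; rewrite permM kk perm1.
have Kp : p \in K by rewrite stabilizerE Gp pv0 eqxx.
have Kq : q \in K by rewrite stabilizerE Gq qv0 eqxx.
have cpq : commute p q.
  have abK : abelian K by apply: (@card_p2group_abelian _ 2); rewrite ?card_stabilizer.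
  exact: (centsP abK).
apply/isog_klein; split=> [|k]; first exact: card_stabilizer.
rewrite stabilizerE => /andP[Gk /eqP kv0].
case: (stabilizer_cases p_refl q_refl pq Gk kv0) => ->; rewrite ?mulg1 ?sqr_inv //.
by move=> y; rewrite !permM -(permM q p) -cpq permM pp qq.
Qed.

Lemma corner_reflections_of_klein : K \isog [set: 'Z_2 * 'Z_2] ->
  exists a b, [/\ corner_reflection a, corner_reflection b, corner_reflection (a * b),
    [/\ a != b, a != a * b & b != a * b] &
    forall p, corner_reflection p -> [\/ p = a, p = b | p = a * b]].
Proof.
case/isog_klein => cardK sqrK.
have K_refl k : k \in K -> k != 1 -> corner_reflection k.
  rewrite stabilizerE => /andP[Gk /eqP kv0] k1; split=> //.
    by move=> y; rewrite -permM sqrK ?perm1 // stabilizerE Gk kv0 eqxx.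
  by apply: contra k1 => /eqP kx0; apply/eqP/stabilizer_eq; rewrite ?perm1.
have : 1 < #|K :\ 1| by move: cardK; rewrite (cardsD1 1) group1 add1n => -[->].
case/card_gt1P => a [b [/setD1P[a1 Ka] /setD1P[b1 Kb] ab]].
have ab1 : a * b != 1.
  apply: contra ab => /eqP ab1; apply/eqP.
  by rewrite -(mulKg a b) ab1 mulg1 -[a^-1]mulg1 -(sqrK a Ka) mulKg.
have a_refl := K_refl _ Ka a1; have b_refl := K_refl _ Kb b1.
have ab_refl := K_refl _ (groupM Ka Kb) ab1.
exists a, b; split=> //.
  split=> //; first by rewrite -{1}(mulg1 a) (inj_eq (mulgI a)) eq_sym.
  by rewrite -{1}(mul1g b) (inj_eq (mulIg b)) eq_sym.
move=> p p_refl; have [Gp pv0 _ px0] := p_refl.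
case: (stabilizer_cases a_refl b_refl ab Gp pv0) => p_eq; [| by constructor 1
  | by constructor 2 | by constructor 3].
by rewrite p_eq perm1 eqxx in px0.
Qed.

Lemma klein_of_class2_map F : is_map e F -> class2_01 e F -> K \isog [set: 'Z_2 * 'Z_2].
Proof.
move=> F_map F_class2; have [p [q [p_refl q_refl pq _]]] := class2_map_face_map F_map F_class2.
exact: klein_of_corner_reflections p_refl q_refl pq.
Qed.

Lemma class2_maps_of_klein : connected_graph e -> K \isog [set: 'Z_2 * 'Z_2] ->
  exists F1 F2 F3,
    [/\ is_map e F1 /\ class2_01 e F1, is_map e F2 /\ class2_01 e F2,
         is_map e F3 /\ class2_01 e F3,
         [/\ ~ map_iso e F1 F2, ~ map_iso e F1 F3 & ~ map_iso e F2 F3] &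
         forall F, is_map e F -> class2_01 e F ->
           [\/ map_iso e F F1, map_iso e F F2 | map_iso e F F3]].
Proof.
move=> e_conn /corner_reflections_of_klein[a [b [a_refl b_refl c_refl [ab ac bc] refl_abc]]].
have class2 p q : corner_reflection p -> corner_reflection q -> p != q ->
    is_map e (face_map p q) /\ class2_01 e (face_map p q).
  by move=> p_refl q_refl pq; split; [apply: face_map_is_map | apply: face_map_class2].
exists (face_map a b), (face_map a (a * b)), (face_map b (a * b)).
split; try exact: class2.
  split; rewrite 1?[face_map _ (a * b)]face_map_sym;
    by apply: face_map_not_iso; rewrite // eq_sym.
move=> F F_map F_class2; have [p [q [p_refl q_refl pq ->]]] := class2_map_face_map F_map F_class2.
move: pq; case: (refl_abc p p_refl) (refl_abc q q_refl) => -> [] ->; rewrite ?eqxx //= => _;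
  rewrite 1?[face_map b a]face_map_sym 1?[face_map (a * b) _]face_map_sym;
  first [exact: Or31 (map_iso_refl _ _) | exact: Or32 (map_iso_refl _ _)
        | exact: Or33 (map_iso_refl _ _)].
Qed.

End BaseArc.
End ArcRegularGraph.

Theorem corollary2p8 (V : finType) (e : rel V) :
  0 < #|V| -> simple_graph e -> connected_graph e -> tetravalent e ->
  arc_regular e ->
  ((exists F, is_map e F /\ class2_01 e F) <-> klein_stabilizers e) /\
  (klein_stabilizers e ->
     exists F1 F2 F3,
       [/\ is_map e F1 /\ class2_01 e F1,
           is_map e F2 /\ class2_01 e F2,
           is_map e F3 /\ class2_01 e F3,
           [/\ ~ map_iso e F1 F2, ~ map_iso e F1 F3 & ~ map_iso e F2 F3] &
           forall F, is_map e F -> class2_01 e F ->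
             [\/ map_iso e F F1, map_iso e F F2 | map_iso e F F3]]).
Proof.
move=> /card_gt0P[v0 _] e_simple e_conn e_tetra e_arc.
have [x0 [s ev0x0 [Gs sv0 sx0]]] := base_arc_exists e_simple e_tetra e_arc v0.
have maps_of_klein := class2_maps_of_klein e_simple e_tetra e_arc ev0x0 Gs sv0 sx0 e_conn.
split; last by move=> klein; apply: maps_of_klein.
split=> [[F [F_map F_class2]] v | klein].
  have [x [t evx [Gt tv tx]]] := base_arc_exists e_simple e_tetra e_arc v.
  exact: (klein_of_class2_map _ _ _ evx Gt tv tx F_map F_class2).
by have [F1 [_ [_ [[F1_map F1_class2] _ _ _ _]]]] := maps_of_klein (klein v0); exists F1.
Qed.
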